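(* A polynomial $P\in\mathbb F[x]$ is irreducible over $\mathbb F=\mathfrak K(t)$ if and only if $P$ is irreducible over the ultra-hull $\mathcal U(\mathbb F)$.
   Context: Let $S$ be an infinite set and $\mathcal D$ a nonprincipal ultrafilter on $S$. Ultraproducts $\prod_{s}A_s/\mathcal D$ are tuples modulo agreement on a set in $\mathcal D$; the class of $(a_s)$ is written $\mathrm{ulim}_s a_s$; operations are componentwise. For each $s$ let $\mathbb F_s$ be an arbitrary field, $\mathfrak A_s=\mathbb F_s[t]$, $\mathfrak F_s=\mathbb F_s(t)$. Let $\mathfrak K=\prod_s\mathbb F_s/\mathcal D$, $\mathbb A=\mathfrak K[t]$, $\mathbb F=\mathfrak K(t)$, and the ultra-hull $\mathcal U(\mathbb F)=\prod_s\mathfrak F_s/\mathcal D$. The ring $\mathbb A$ is identified with a subring of $\prod_s\mathfrak A_s/\mathcal D$ via $\sum_i(\mathrm{ulim}_s a_{i,s})t^i\mapsto \mathrm{ulim}_s\sum_i a_{i,s}t^i$, and hence $\mathbb F$ with a subfield of $\mathcal U(\mathbb F)$; thus $\mathbb F[x]\subseteq\mathcal U(\mathbb F)[x]$. *)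

From HB Require Import structures.
From mathcomp Require Import all_boot all_order all_algebra.
From mathcomp Require Import generic_quotient.
From mathcomp Require Import boolp classical_sets filter cardinality.
Set Implicit Arguments. Unset Strict Implicit. Unset Printing Implicit Defensive.
Import Order.TTheory GRing.Theory Num.Theory.
Local Open Scope ring_scope.
Local Open Scope classical_set_scope.
Local Open Scope quotient_scope.

(* Ultraproduct  prod_s F_s / D  of a family of fields F : S -> fieldType
   along an ultrafilter D on S, built as the quotient of the product ring
   by the ideal { a | {s | a_s = 0} \in D }.                             *)

Section Ultraproduct.
Variables (S : Type) (D : set_system S) (DU : UltraFilter D)
          (F : S -> fieldType).

Definition prodR := forall s, F s.
HB.instance Definition _ := Choice.copy prodR (forall s : S, F s).

Definition prodR0 : prodR := fun s => 0.
Definition prodR1 : prodR := fun s => 1.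
Definition prodRopp (x : prodR) : prodR := fun s => - x s.
Definition prodRadd (x y : prodR) : prodR := fun s => x s + y s.
Definition prodRmul (x y : prodR) : prodR := fun s => x s * y s.

Lemma prodRaddA : associative prodRadd.
Proof. by move=> x y z; apply: functional_extensionality_dep => s; rewrite /prodRadd addrA. Qed.
Lemma prodRaddC : commutative prodRadd.
Proof. by move=> x y; apply: functional_extensionality_dep => s; rewrite /prodRadd addrC. Qed.
Lemma prodRadd0 : left_id prodR0 prodRadd.
Proof. by move=> x; apply: functional_extensionality_dep => s; rewrite /prodRadd add0r. Qed.
Lemma prodRaddN : left_inverse prodR0 prodRopp prodRadd.
Proof. by move=> x; apply: functional_extensionality_dep => s; rewrite /prodRadd addNr. Qed.

HB.instance Definition _ :=
  GRing.isZmodule.Build prodR prodRaddA prodRaddC prodRadd0 prodRaddN.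

Lemma prodRmulA : associative prodRmul.
Proof. by move=> x y z; apply: functional_extensionality_dep => s; rewrite /prodRmul mulrA. Qed.
Lemma prodRmulC : commutative prodRmul.
Proof. by move=> x y; apply: functional_extensionality_dep => s; rewrite /prodRmul mulrC. Qed.
Lemma prodRmul1 : left_id prodR1 prodRmul.
Proof. by move=> x; apply: functional_extensionality_dep => s; rewrite /prodRmul mul1r. Qed.
Lemma prodRmulDl : left_distributive prodRmul +%R.
Proof. by move=> x y z; apply: functional_extensionality_dep => s; rewrite /prodRmul /= /prodRadd mulrDl. Qed.

Lemma ultra_inhabited : exists s : S, True.
Proof.
apply: contrapT => /forallNP H.
have FD : ProperFilter D := @ultra_proper _ _ DU.
apply: (filter_not_empty D).
suff -> : set0 = [set: S] by exact: filterT.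
by apply/seteqP; split => // s _; case: (H s).
Qed.

Lemma prodR1_neq0 : prodR1 != (0 : prodR).
Proof.
apply/eqP => /(congr1 (fun f : prodR => f)) e.
have [s _] := ultra_inhabited.
by move: (congr1 (fun f => f s) e) => /= /eqP; rewrite oner_eq0.
Qed.

HB.instance Definition _ := GRing.Zmodule_isComNzRing.Build prodR
  prodRmulA prodRmulC prodRmul1 prodRmulDl prodR1_neq0.

Definition nullD : prodR -> bool := fun x => `[< D [set s | x s = 0] >].

Lemma nullD_ideal : idealr_closed nullD.
Proof.
have FD : ProperFilter D := @ultra_proper _ _ DU.
split.
- apply/asboolP; apply: filterS filterT => s _ //.
- apply/negP => /asboolP H; apply: (filter_not_empty D).
  by apply: filterS H => s /= /eqP; rewrite oner_eq0.
- move=> a u v /asboolP Hu /asboolP Hv; apply/asboolP.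
  apply: filterS (filterI Hu Hv) => s [/= us vs].
  by rewrite /GRing.mul /= /prodRmul /GRing.add /= /prodRadd us vs mulr0 addr0.
Qed.

HB.instance Definition _ := isIdealr.Build prodR nullD nullD_ideal.

Definition nullI : idealr prodR := nullD.
Definition ultraprod_ring := {ideal_quot nullI}.
HB.instance Definition _ := GRing.ComNzRing.on ultraprod_ring.

Definition ultra_inv (x : ultraprod_ring) : ultraprod_ring :=
  \pi_ultraprod_ring (fun s => (repr x s)^-1 : F s).

Lemma ultra_mulVf (x : ultraprod_ring) : x != 0 -> ultra_inv x * x = 1.
Proof.
have FD : ProperFilter D := @ultra_proper _ _ DU.
move=> x0; rewrite /ultra_inv -[in X in _ * X](reprK x) -pi_mulr -pi_oner.
apply/eqP; rewrite piE Quotient.equivE; apply/asboolP.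
have nx : ~ D [set s | repr x s = 0].
  move=> H; move/eqP: x0; apply; rewrite -(reprK x) -pi_zeror.
  by apply/eqP; rewrite piE Quotient.equivE subr0; apply/asboolP.
have [H|H] := in_ultra_setVsetC [set s | repr x s = 0] DU; first by [].
apply: filterS H => s /= xs.
rewrite /GRing.add /= /prodRadd /GRing.opp /= /prodRopp /GRing.mul /= /prodRmul.
by rewrite /GRing.one /= /prodR1 mulVf ?subrr //; apply/eqP.
Qed.

Lemma ultra_inv0 : ultra_inv 0 = 0.
Proof.
have FD : ProperFilter D := @ultra_proper _ _ DU.
have : \pi_ultraprod_ring (repr (0 : ultraprod_ring)) ==
       \pi_ultraprod_ring (0 : prodR) by rewrite reprK pi_zeror.
rewrite piE Quotient.equivE => /asboolP H0.
rewrite /ultra_inv; transitivity (\pi_ultraprod_ring (0 : prodR));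
  last exact: pi_zeror.
apply/eqP; rewrite piE Quotient.equivE; apply/asboolP.
apply: filterS H0 => s /=.
rewrite /GRing.add /= /prodRadd /GRing.opp /= /prodRopp /GRing.zero /= /prodR0.
by rewrite !subr0 => ->; rewrite invr0.
Qed.

Definition ultraprod := ultraprod_ring.
HB.instance Definition _ := GRing.ComNzRing.on ultraprod.
HB.instance Definition _ :=
  GRing.ComNzRing_isField.Build ultraprod ultra_mulVf ultra_inv0.

Definition ulim (a : forall s, F s) : ultraprod := \pi_ultraprod_ring a.

End Ultraproduct.

(* The setting of the paper:  K = prod F_s / D,  A = K[t],  F = K(t),
   U(F) = prod F_s(t) / D, and the identification of F with a subfield
   of U(F).                                                            *)
Section Setting.
Variables (S : Type) (D : set_system S) (DU : UltraFilter D)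
          (F : S -> fieldType).

Definition fK : fieldType := ultraprod DU F.
Definition fF : fieldType := {fraction {poly fK}}.
Definition ultrahull : fieldType :=
  ultraprod DU (fun s => ({fraction {poly F s}} : fieldType)).

Definition A_to_U (p : {poly fK}) : ultrahull :=
  ulim DU (fun s => (tofrac (\poly_(i < size p) (repr (p`_i : fK) : prodR F) s)
                      : {fraction {poly F s}})).

Definition F_to_U (x : fF) : ultrahull :=
  A_to_U (\n_(repr x)) / A_to_U (\d_(repr x)).

End Setting.

Arguments A_to_U {S D} DU F p.
Arguments F_to_U {S D} DU F x.

From HB Require Import structures.
From mathcomp Require Import all_boot all_order all_algebra qfpoly.
From mathcomp Require Import generic_quotient.
From mathcomp Require Import boolp classical_sets filter cardinality.
From mathcomp Require Import ring.
Set Implicit Arguments. Unset Strict Implicit. Unset Printing Implicit Defensive.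
Import GRing.Theory.
Local Open Scope ring_scope.
Local Open Scope classical_set_scope.
Local Open Scope quotient_scope.

(* A factorization of P over K(t) maps to one over U(F), so only the converse
   needs an argument.  After clearing denominators, a factorization G * H of P
   over U(F) becomes one of a polynomial Q with coefficients in K[t].  Writing
   Q, G, H as ultralimits of families over the fields F_s(t), the factorization
   G_s * H_s = Q_s holds for D-almost every s, and Gauss's lemma moves it to
   F_s[t][x] without changing x-degrees.  The t-degrees of the new factors are
   then bounded by the t-degree of Q_s, hence uniformly in s, so the factors
   have ultralimits in K[t][x]: these factor Q over K[t] with the x-degrees of
   G and H. *)

Lemma tofrac_inj (R : idomainType) : injective (@tofrac R).
Proof. by move=> x y /eqP; rewrite tofrac_eq => /eqP. Qed.

Lemma frac_reprE (R : idomainType) (x : {fraction R}) :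
  x = tofrac \n_(repr x) / tofrac \d_(repr x).
Proof.
apply: (canRL (mulfK _)); first by rewrite tofrac_eq0 denom_ratioP.
rewrite -{1}[x]reprK; unlock tofrac.
rewrite -[_ * _](FracField.pi_mul (repr x) (Ratio \d_(repr x) 1)).
apply/eqmodP; rewrite /= FracField.equivfE /FracField.mulf.
by rewrite !numden_Ratio ?mulf_neq0 ?oner_neq0 ?denom_ratioP // !mulr1 mulrC.
Qed.

Lemma fracP (R : idomainType) (x : {fraction R}) :
  exists2 nd : R * R, nd.2 != 0 & x = tofrac nd.1 / tofrac nd.2.
Proof. by exists (\n_(repr x), \d_(repr x)); rewrite ?denom_ratioP -?frac_reprE. Qed.

Section FractionLift.
Variables (R : idomainType) (L : fieldType) (f : {rmorphism R -> L}).
Hypothesis f_inj : injective f.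

Definition frac_lift (x : {fraction R}) : L := f \n_(repr x) / f \d_(repr x).

Lemma frac_liftE a b : b != 0 -> frac_lift (tofrac a / tofrac b) = f a / f b.
Proof.
move=> b0; rewrite /frac_lift; set n := \n_(repr _); set d := \d_(repr _).
have d0 : d != 0 := denom_ratioP _.
have /eqP := frac_reprE (tofrac a / tofrac b); rewrite -/n -/d.
rewrite eqr_div ?tofrac_eq0 // -!rmorphM tofrac_eq => /eqP adnb.
by apply/eqP; rewrite eqr_div ?(raddf_eq0 _ f_inj) // -!rmorphM adnb.
Qed.

Lemma frac_lift_tofrac a : frac_lift (tofrac a) = f a.
Proof. by rewrite -[tofrac a]divr1 -tofrac1 frac_liftE ?oner_neq0 // rmorph1 divr1. Qed.

Lemma frac_lift_is_nmod_morphism : nmod_morphism frac_lift.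
Proof.
split=> [|x y]; first by rewrite -tofrac0 frac_lift_tofrac rmorph0.
have [[a b] /= b0 ->] := fracP x; have [[c d] /= d0 ->] := fracP y.
rewrite !frac_liftE // !addf_div ?tofrac_eq0 ?(raddf_eq0 _ f_inj) // -!rmorphM -!rmorphD.
by rewrite frac_liftE ?mulf_neq0.
Qed.

Lemma frac_lift_is_monoid_morphism : monoid_morphism frac_lift.
Proof.
split=> [|x y]; first by rewrite -tofrac1 frac_lift_tofrac rmorph1.
have [[a b] /= b0 ->] := fracP x; have [[c d] /= d0 ->] := fracP y.
rewrite mulf_div -!rmorphM /= !frac_liftE ?mulf_neq0 //.
by rewrite !rmorphM mulf_div.
Qed.

End FractionLift.

Lemma clear_denominators (R : idomainType) (p : {poly {fraction R}}) :
  exists2 aq : R * {poly R}, aq.1 != 0 & map_poly (@tofrac _) aq.2 = tofrac aq.1 *: p.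
Proof.
elim/poly_ind: p => [|p c [[a q] /= a0 qE]].
  by exists (1, 0); rewrite /= ?oner_neq0 // map_poly0 scaler0.
have [[n d] /= d0 cE] := fracP c.
have Ec : c * tofrac d = tofrac n by rewrite cE mulfVK ?tofrac_eq0.
exists (a * d, d%:P * q * 'X + (a * n)%:P) => /=; first by rewrite mulf_neq0.
rewrite rmorphD !rmorphM /= !map_polyC map_polyX /= qE -!mul_polyC.
by rewrite !rmorphM /= -Ec !polyCM; ring.
Qed.

(** * Gauss's lemma over k[t] *)

Lemma size_polyM_leq_add (R : nzRingType) (p q : {poly R}) m n :
  (size p <= m)%N -> (size q <= n)%N -> (size (p * q)%R <= m + n)%N.
Proof.
move=> pm qn; apply: leq_trans (size_polyMleq _ _) (leq_trans (leq_pred _) _).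
exact: leq_add.
Qed.

Lemma sizeY_leq_mulr (R : idomainType) (G H : {poly {poly R}}) :
  H != 0 -> (sizeY G <= sizeY (G * H))%N.
Proof.
move=> H0; have [->|G0] := eqVneq G 0; first by rewrite mul0r.
rewrite !sizeYE rmorphM /= size_mul ?swapXY_eq0 //.
by rewrite -subn1 -addnBA ?leq_addr // size_poly_gt0 swapXY_eq0.
Qed.

Section Gauss.
Variable k : fieldType.

Lemma irredpZ (a : k) p : a != 0 -> irreducible_poly p -> irreducible_poly (a *: p).
Proof.
move=> a0 [p1 p_irr]; split=> [|q q1]; first by rewrite size_scale.
by rewrite dvdpZr // => /(p_irr q q1) /eqp_trans; apply; rewrite eqp_sym eqp_scale.
Qed.

Lemma exists_monic_irredp_dvdp (p : {poly k}) :
  (1 < size p)%N -> exists2 q, monic_irreducible_poly q & q %| p.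
Proof.
move=> p1; suff [q q_irr qp] : exists2 q, irreducible_poly q & q %| p.
  have lq0 : lead_coef q != 0 by rewrite lead_coef_eq0 irredp_neq0.
  exists ((lead_coef q)^-1 *: q); last by rewrite dvdpZl ?invr_eq0.
  split; first by apply: irredpZ; rewrite ?invr_eq0.
  by apply/monicP; rewrite lead_coefZ mulVf.
have [n] := ubnP (size p); elim: n p p1 => // n IHn p p1 /ltnSE le_p_n.
have [p_irr|p_red] := pselect (irreducible_poly p); first by exists p; rewrite ?dvdpp.
have [q [q1 qp pNq]] : exists q : {poly k}, [/\ size q != 1%N, q %| p & ~~ (q %= p)].
  apply: contrapT => noq; apply: p_red; split=> // q q1 qp.
  by apply: contrapT => /negP pNq; apply: noq; exists q.
have p0 : p != 0 by rewrite -size_poly_gt0 (ltn_trans _ p1).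
have q0 : q != 0 by apply: contraNneq p0 => q0; rewrite -(dvd0p p) -q0.
have lt_q_p : (size q < size p)%N.
  rewrite ltn_neqAle dvdp_leq // andbT.
  by apply: contraNneq pNq => /eqP; rewrite dvdp_size_eqp.
have [|r r_irr rq] := IHn q _ (leq_trans lt_q_p le_p_n).
  by rewrite ltn_neqAle eq_sym q1 size_poly_gt0.
by exists r => //; apply: dvdp_trans qp.
Qed.

Section ReductionModuloIrreducible.
Variables (pi : {poly k}) (piI : monic_irreducible_poly pi).

Definition in_qfpoly : {poly k} -> {poly %/ pi with piI} := in_qpoly pi.
HB.instance Definition _ := GRing.RMorphism.copy in_qfpoly (in_qpoly pi).

Lemma in_qfpoly_eq0 p : (in_qfpoly p == 0) = (pi %| p).
Proof.
rewrite dvdpE -[X in Pdiv.Ring.rdvdp X](mk_monicE piI).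
by apply/eqP/Pdiv.Ring.rmodp_eq0P => [/(congr1 val)//|p0]; apply: val_inj.
Qed.

(* Reduction modulo the prime [pi] maps [G * H] into the domain {poly k[t]/(pi)}. *)
Lemma dvdp_coefsM (G H : {poly {poly k}}) :
  (forall i, pi %| (G * H)`_i) -> (forall i, pi %| G`_i) \/ (forall i, pi %| H`_i).
Proof.
have coefs0 (P : {poly {poly k}}) : (forall i, pi %| P`_i) <-> map_poly in_qfpoly P = 0.
  split=> [P0|/polyP P0 i]; last by rewrite -in_qfpoly_eq0 -coef_map P0 coef0.
  by apply/polyP => i; rewrite coef_map coef0; apply/eqP; rewrite in_qfpoly_eq0.
move=> /coefs0; rewrite rmorphM => /eqP; rewrite mulf_eq0.
by case/orP=> /eqP /coefs0; [left|right].
Qed.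

End ReductionModuloIrreducible.

Lemma dvdp_coefsP (pi : {poly k}) (G : {poly {poly k}}) : pi != 0 ->
  (forall i, pi %| G`_i) -> exists2 G', G = pi%:P * G' & size G' = size G.
Proof.
move=> pi0 piG; have GE : G = pi%:P * map_poly (fun x => x %/ pi) G.
  by apply/polyP => i; rewrite coefCM coef_map_id0 ?div0p // mulrC divpK.
by exists (map_poly (fun x => x %/ pi) G); rewrite // [in RHS]GE size_Cmul ?polyC_eq0.
Qed.

Lemma factor_cancel_const (Q G H : {poly {poly k}}) (c : {poly k}) :
  c != 0 -> G * H = c%:P * Q ->
  exists G' H', [/\ G' * H' = Q, size G' = size G & size H' = size H].
Proof.
(* Induction on [size c]: a prime factor of [c] divides every coefficient of
   [G] or of [H] (dvdp_coefsM), and is cancelled there. *)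
have [n] := ubnP (size c); elim: n c G H => // n IHn c G H /ltnSE le_c_n c0 GHE.
have [c1|c1] := leqP (size c) 1.
  have [a cE] : exists a, c = a%:P by exists c`_0; apply: size1_polyC.
  have a0 : a != 0 by apply: contraNneq c0; rewrite cE => ->.
  exists G, (a^-1%:P%:P * H); split=> //; last by rewrite size_Cmul // !polyC_eq0 invr_eq0.
  by rewrite mulrCA GHE cE mulrA -!polyCM mulVf // mul1r.
have [pi piI pic] := exists_monic_irredp_dvdp c1.
have pi0 : pi != 0 := irredp_neq0 piI.1.
have cE : c = (c %/ pi) * pi by rewrite divpK.
have c'0 : c %/ pi != 0 by apply: contraNneq c0 => c'0; rewrite cE c'0 mul0r.
have lt_c'_n : (size (c %/ pi)%R < n)%N.
  rewrite size_divp //; apply: leq_trans _ le_c_n.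
  by rewrite ltn_subrL -subn1 subn_gt0 piI.1.1 (ltnW c1).
have step (G1 H1 : {poly {poly k}}) : G1 * H1 = c%:P * Q -> (forall i, pi %| G1`_i) ->
    exists G' H', [/\ G' * H' = Q, size G' = size G1 & size H' = size H1].
  move=> G1H1E /(dvdp_coefsP pi0)[G1' G1E <-].
  apply: IHn lt_c'_n c'0 _; apply: (mulfI (_ : pi%:P != 0)); first by rewrite polyC_eq0.
  by rewrite mulrA -G1E G1H1E [in LHS]cE polyCM mulrAC mulrC.
have piGH i : pi %| (G * H)`_i by rewrite GHE coefCM dvdp_mulr.
case: (dvdp_coefsM piI piGH) => [/(step _ _ GHE) //|].
move/(step _ _ (etrans (mulrC _ _) GHE)) => [H' [G' [E sH sG]]].
by exists G', H'; rewrite mulrC.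
Qed.

Lemma Gauss_factor (Q : {poly {poly k}}) (G H : {poly {fraction {poly k}}}) :
  G * H = map_poly (@tofrac _) Q ->
  exists G' H', [/\ G' * H' = Q, size G' = size G & size H' = size H].
Proof.
move=> GHE; have [[a G1] /= a0 G1E] := clear_denominators G.
have [[b H1] /= b0 H1E] := clear_denominators H.
have tofrac0 := rmorph0 (@tofrac {poly k}).
have /factor_cancel_const : G1 * H1 = (a * b)%:P * Q.
  apply: (map_inj_poly (@tofrac_inj _) tofrac0); rewrite !rmorphM /= G1E H1E.
  by rewrite !map_polyC /= -scalerAl -scalerAr scalerA GHE -mul_polyC polyCM.
case=> [|G' [H' [E sG sH]]]; first by rewrite mulf_neq0.
exists G', H'; split; rewrite // ?sG ?sH -(size_map_inj_poly (@tofrac_inj _) tofrac0).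
  by rewrite G1E size_scale ?tofrac_eq0.
by rewrite H1E size_scale ?tofrac_eq0.
Qed.

Lemma Gauss_factor_sizeY (Q : {poly {poly k}}) (G H : {poly {fraction {poly k}}}) :
    G != 0 -> H != 0 -> G * H = map_poly (@tofrac _) Q ->
  exists G' H', [/\ G' * H' = Q, size G' = size G, size H' = size H,
                    (sizeY G' <= sizeY Q)%N & (sizeY H' <= sizeY Q)%N].
Proof.
move=> G0 H0 /Gauss_factor[G' [H' [E sG sH]]].
have [G'0 H'0] : G' != 0 /\ H' != 0 by rewrite -!size_poly_gt0 sG sH !size_poly_gt0.
exists G', H'; split; rewrite // -E ?sizeY_leq_mulr //.
by rewrite mulrC sizeY_leq_mulr.
Qed.

End Gauss.

Definition reducible_poly (L : fieldType) (p : {poly L}) :=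
  exists g h, [/\ g * h = p, (1 < size g)%N & (1 < size h)%N].

Lemma irredpP (L : fieldType) (p : {poly L}) :
  irreducible_poly p <-> (1 < size p)%N /\ ~ reducible_poly p.
Proof.
split=> [[p1 p_irr]|[p1 p_red]].
  split=> // -[g [h [ghE g1 h1]]].
  have [g0 h0] : g != 0 /\ h != 0 by rewrite -!size_poly_gt0 !(ltn_trans _ g1, ltn_trans _ h1).
  have /eqp_size : g %= p by apply: p_irr; rewrite ?neq_ltn ?g1 ?orbT // -ghE dvdp_mulr.
  rewrite -ghE size_mul //; case: (size h) h1 => [|[|m]] // _.
  by rewrite addnS /= => /eqP; rewrite -{1}[size g]addn0 eqn_add2l.
split=> // q q1 qp; have p0 : p != 0 by rewrite -size_poly_gt0 (ltn_trans _ p1).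
have q0 : q != 0 by apply: contraNneq p0 => q0; rewrite -(dvd0p p) -q0.
have pE := divpK qp; have [d1|d1] := leqP (size (p %/ q)) 1; last first.
  by case: p_red; exists (p %/ q), q; split=> //; rewrite ltn_neqAle eq_sym q1 size_poly_gt0.
have d0 : (p %/ q)`_0 != 0.
  by apply: contraNneq p0 => d0; rewrite -pE (size1_polyC d1) d0 mul0r.
by rewrite -pE (size1_polyC d1) mul_polyC eqp_sym eqp_scale.
Qed.

Lemma reducible_map_poly (L M : fieldType) (f : {rmorphism L -> M}) (p : {poly L}) :
  reducible_poly p -> reducible_poly (map_poly f p).
Proof.
by move=> [g [h [<- g1 h1]]]; exists (map_poly f g), (map_poly f h); rewrite rmorphM !size_map_poly.
Qed.

Section Ultralimit.
Variables (S : Type) (D : set_system S) (DU : UltraFilter D).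

Lemma near_choice (T : S -> Type) (Q P : forall s, T s -> Prop) :
    (forall s, exists x, Q s x) -> D [set s | exists x, Q s x /\ P s x] ->
  exists x : forall s, T s, (forall s, Q s (x s)) /\ D [set s | P s (x s)].
Proof.
move=> Qex good.
have xP s : exists x, Q s x /\ ((exists x, Q s x /\ P s x) -> P s x).
  have [[x [Qx Px]]|noPQ] := pselect (exists x, Q s x /\ P s x).
    by exists x; split => // _.
  by have [x Qx] := Qex s; exists x; split => // /noPQ.
exists (fun s => projT1 (cid (xP s))); split=> [s|]; first by case: (projT2 (cid (xP s))).
by apply: filterS good => s /=; case: (projT2 (cid (xP s))).
Qed.

Lemma near_eq (T : Type) (f : S -> T) (a b : T) :
  D [set s | f s = a] -> D [set s | f s = b] -> a = b.
Proof.
move=> fa fb; have FD : ProperFilter D := ultra_proper.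
by have [s [/= <- <-]] := filter_ex (filterI fa fb).
Qed.

Lemma near_ord_forall (N : nat) (P : nat -> S -> Prop) :
  (forall i, (i < N)%N -> D [set s | P i s]) -> D [set s | forall i, (i < N)%N -> P i s].
Proof.
move=> PD; apply: filterS (@filter_forall _ 'I_N (fun i => P i) D _ (fun i => PD i (ltn_ord i))).
by move=> s /= Ps i ltiN; apply: (Ps (Ordinal ltiN)).
Qed.

Definition sizes_le (R : S -> nzRingType) N (f : forall s, {poly R s}) :=
  forall s, (size (f s) <= N)%N.

Lemma sizes_leM (R : S -> nzRingType) N1 N2 (f g : forall s, {poly R s}) :
  sizes_le N1 f -> sizes_le N2 g -> sizes_le (N1 + N2) (fun s => f s * g s).
Proof. by move=> fN1 gN2 s; apply: size_polyM_leq_add. Qed.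

Lemma near_size_eq (R : S -> nzRingType) (T : nzRingType) N
    (f : forall s, {poly R s}) (p : {poly T}) :
    sizes_le N f -> (forall i, p`_i = 0 <-> D [set s | (f s)`_i = 0]) ->
  D [set s | size (f s) = size p].
Proof.
move=> fN p0E.
have FD : ProperFilter D := ultra_proper.
have pN : (size p <= N)%N.
  apply/leq_sizeP => j leNj; apply/p0E; apply: filterS filterT => s _.
  exact: (leq_sizeP _ _ (fN s)).
have : D [set s | forall i, (i < N)%N -> ((f s)`_i == 0) = (p`_i == 0)].
  apply: near_ord_forall => i _.
  have [/p0E|pi0] := eqVneq p`_i 0; first by apply: filterS => s /= ->; rewrite eqxx.
  have [fi0|] := in_ultra_setVsetC [set s | (f s)`_i = 0] DU.
    by move/p0E: fi0; move/eqP: pi0.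
  by apply: filterS => s /= /eqP/negPf.
apply: filterS => s /= fp; apply/eqP; rewrite eqn_leq.
apply/andP; split; apply/leq_sizeP => j lej; case: (ltnP j N) => [ltjN|leNj].
- by apply/eqP; rewrite fp // (leq_sizeP _ _ (leqnn _)).
- exact: (leq_sizeP _ _ (fN s)).
- by apply/eqP; rewrite -fp // (leq_sizeP _ _ (leqnn _)).
- exact: (leq_sizeP _ _ pN).
Qed.

Variable F : S -> fieldType.

Lemma prodR_subE (a b : prodR F) s : (a - b) s = a s - b s.
Proof. by []. Qed.

Lemma prodR_sumE (I : Type) (r : seq I) (f : I -> prodR F) s :
  (\sum_(i <- r) f i) s = \sum_(i <- r) f i s.
Proof. by elim/big_rec2: _ => // i y1 y2 _ <-. Qed.

HB.instance Definition _ :=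
  GRing.RMorphism.copy (@ulim _ _ DU F : prodR F -> ultraprod DU F) (\pi_(ultraprod_ring DU F)).

Lemma ulim_eq0 (a : prodR F) : ulim DU a = 0 <-> D [set s | a s = 0].
Proof.
rewrite -(rmorph0 (@ulim _ _ DU F)) /ulim; split.
  by move/eqP; rewrite piE Quotient.equivE => /asboolP; apply: filterS => s /=; rewrite subr0.
move=> a0; apply/eqP; rewrite piE Quotient.equivE; apply/asboolP.
by apply: filterS a0 => s /=; rewrite subr0.
Qed.

Lemma ulim_eq (a b : prodR F) : ulim DU a = ulim DU b <-> D [set s | a s = b s].
Proof.
have -> : (ulim DU a = ulim DU b) = (ulim DU (a - b) = 0).
  apply/propext; rewrite rmorphB /=; split=> [-> | /eqP]; first exact: subrr.
  by rewrite subr_eq0 => /eqP.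
rewrite ulim_eq0; split; apply: filterS => s /=; rewrite prodR_subE.
  by move=> /eqP; rewrite subr_eq0 => /eqP.
by move=> ->; rewrite subrr.
Qed.

Lemma ulim_repr (x : ultraprod DU F) : ulim DU (repr x) = x.
Proof. exact: reprK. Qed.

End Ultralimit.

(** * Ultralimits of polynomials of bounded size *)

Section PolyUltralimit.
Variables (S : Type) (D : set_system S) (DU : UltraFilter D) (F : S -> fieldType).
Local Notation U := (ultraprod DU F).
Let FD : ProperFilter D := ultra_proper.

(* A uniform bound [N] on the sizes is needed for the coefficientwise
   ultralimit of a family of polynomials to be a polynomial. *)
Definition ulim_poly N (f : forall s, {poly F s}) : {poly U} :=
  \poly_(i < N) ulim DU (fun s => (f s)`_i).

Lemma coef_ulim_poly N f i :
  sizes_le N f -> (ulim_poly N f)`_i = ulim DU (fun s => (f s)`_i).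
Proof.
move=> fN; rewrite coef_poly; case: ltnP => // leNi.
symmetry; apply/ulim_eq0; apply: filterS filterT => s _ /=.
exact: (leq_sizeP _ _ (fN s)).
Qed.

Lemma ulim_poly_eq N f g : sizes_le N f -> sizes_le N g ->
  ulim_poly N f = ulim_poly N g <-> D [set s | f s = g s].
Proof.
move=> fN gN; split=> [fg|]; last first.
  move=> fg; apply/polyP => i; rewrite !coef_poly; case: ltnP => // _.
  by apply/ulim_eq; apply: filterS fg => s /= ->.
have : D [set s | forall i, (i < N)%N -> (f s)`_i = (g s)`_i].
  apply: near_ord_forall => i _; apply/ulim_eq.
  by rewrite -(coef_ulim_poly _ fN) -(coef_ulim_poly _ gN) fg.
apply: filterS => s /= fgN; apply/polyP => i; case: (ltnP i N) => [|leNi]; first exact: fgN.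
by rewrite (leq_sizeP _ _ (fN s)) ?(leq_sizeP _ _ (gN s)).
Qed.

Lemma ulim_poly_eq0 N f : sizes_le N f -> ulim_poly N f = 0 <-> D [set s | f s = 0].
Proof.
move=> fN; have -> : 0 = ulim_poly N (fun=> 0).
  apply/polyP => i; rewrite coef_poly coef0; case: ifP => // _.
  by symmetry; apply/ulim_eq0; apply: filterS filterT => s _ /=; rewrite coef0.
by apply: ulim_poly_eq => // s; rewrite size_poly0.
Qed.

Lemma size_ulim_poly N f :
  sizes_le N f -> D [set s | size (f s) = size (ulim_poly N f)].
Proof.
by move=> fN; apply: near_size_eq (fN) _ => i; rewrite coef_ulim_poly //; apply: ulim_eq0.
Qed.

Lemma ulim_poly_widen N N' f :
  sizes_le N f -> (N <= N')%N -> ulim_poly N' f = ulim_poly N f.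
Proof.
move=> fN leNN'; have fN' : sizes_le N' f by move=> s; apply: leq_trans leNN'.
by apply/polyP => i; rewrite !coef_ulim_poly.
Qed.

Lemma ulim_polyB N f g :
  ulim_poly N (fun s => f s - g s) = ulim_poly N f - ulim_poly N g.
Proof.
apply/polyP => i; rewrite coefB !coef_poly; case: ifP; rewrite ?subr0 // => _.
by rewrite -rmorphB; congr ulim; apply: functional_extensionality_dep => s; rewrite coefB.
Qed.

Lemma ulim_poly_sum N (I : Type) (r : seq I) (f : I -> forall s, {poly F s}) :
  ulim_poly N (fun s => \sum_(i <- r) f i s) = \sum_(i <- r) ulim_poly N (f i).
Proof.
apply/polyP => j; rewrite coef_sum coef_poly; under eq_bigr do rewrite coef_poly.
case: ifP => _; last by rewrite big1.
rewrite -rmorph_sum; congr ulim; apply: functional_extensionality_dep => s.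
by rewrite prodR_sumE coef_sum.
Qed.

Lemma ulim_polyM N1 N2 f g : sizes_le N1 f -> sizes_le N2 g ->
  ulim_poly (N1 + N2) (fun s => f s * g s) = ulim_poly N1 f * ulim_poly N2 g.
Proof.
move=> fN1 gN2; have fgN := sizes_leM fN1 gN2.
apply/polyP => k; rewrite coef_ulim_poly // coefM.
under [RHS]eq_bigr do rewrite !coef_ulim_poly // -rmorphM.
rewrite -rmorph_sum; congr ulim; apply: functional_extensionality_dep => s.
by rewrite prodR_sumE coefM.
Qed.

Definition poly_repr (p : {poly U}) : forall s, {poly F s} :=
  fun s => \poly_(i < size p) (repr p`_i : prodR F) s.

Lemma sizes_le_poly_repr (p : {poly U}) : sizes_le (size p) (poly_repr p).
Proof. by move=> s; apply: size_poly. Qed.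

Lemma ulim_poly_repr (p : {poly U}) : ulim_poly (size p) (poly_repr p) = p.
Proof.
apply/polyP => i; rewrite coef_poly; case: ltnP => [ltip|lepi].
  rewrite -[RHS]ulim_repr; congr ulim.
  by apply: functional_extensionality_dep => s; rewrite coef_poly ltip.
by rewrite (leq_sizeP _ _ (leqnn _)).
Qed.

Definition sizesXY_le M e (G : forall s, {poly {poly F s}}) :=
  sizes_le M G /\ forall i, sizes_le e (fun s => (G s)`_i).

Definition ulim_polyXY M e (G : forall s, {poly {poly F s}}) : {poly {poly U}} :=
  \poly_(i < M) ulim_poly e (fun s => (G s)`_i).

Lemma coef_ulim_polyXY M e G i :
  sizesXY_le M e G -> (ulim_polyXY M e G)`_i = ulim_poly e (fun s => (G s)`_i).
Proof.
move=> [GM Ge]; rewrite coef_poly; case: ltnP => // leMi.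
by symmetry; apply/ulim_poly_eq0 => //; apply: filterS filterT => s _ /=;
  rewrite (leq_sizeP _ _ (GM s)).
Qed.

Lemma eq_ulim_polyXY M e G H :
  D [set s | G s = H s] -> ulim_polyXY M e G = ulim_polyXY M e H.
Proof.
move=> GH; apply/polyP => i; rewrite !coef_poly; case: ifP => // _.
by apply/polyP => j; rewrite !coef_poly; case: ifP => // _; apply/ulim_eq;
  apply: filterS GH => s /= ->.
Qed.

Lemma ulim_polyXY_widen M M' e e' G : sizesXY_le M e G ->
  (M <= M')%N -> (e <= e')%N -> ulim_polyXY M' e' G = ulim_polyXY M e G.
Proof.
move=> [GM Ge] leMM' lee'.
have GM' : sizesXY_le M' e' G.
  by split=> [s|i s]; [apply: leq_trans (GM s) _ | apply: leq_trans (Ge i s) _].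
apply/polyP => i; rewrite !coef_ulim_polyXY //; exact: ulim_poly_widen.
Qed.

Lemma ulim_polyXYM M1 M2 e1 e2 G H : sizesXY_le M1 e1 G -> sizesXY_le M2 e2 H ->
  ulim_polyXY (M1 + M2) (e1 + e2) (fun s => G s * H s) =
  ulim_polyXY M1 e1 G * ulim_polyXY M2 e2 H.
Proof.
move=> GMe HMe; have [GM Ge] := GMe; have [HM He] := HMe.
have GHMe : sizesXY_le (M1 + M2) (e1 + e2) (fun s => G s * H s).
  split=> [s|k s]; first exact: size_polyM_leq_add (GM s) (HM s).
  rewrite coefM; elim/big_rec: _ => [|i p _ IHp]; first by rewrite size_poly0.
  apply: leq_trans (size_polyD _ _) _; rewrite geq_max IHp andbT.
  exact: size_polyM_leq_add (Ge _ s) (He _ s).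
apply/polyP => k; rewrite coef_ulim_polyXY // coefM.
under [RHS]eq_bigr do rewrite !coef_ulim_polyXY // -ulim_polyM //.
by rewrite -ulim_poly_sum; congr ulim_poly; apply: functional_extensionality_dep => s;
  rewrite coefM.
Qed.

Lemma ulim_polyXY_surj (Q : {poly {poly U}}) :
  exists G, sizesXY_le (size Q) (sizeY Q) G /\ ulim_polyXY (size Q) (sizeY Q) G = Q.
Proof.
exists (fun s => \poly_(i < size Q) \poly_(j < sizeY Q) (repr Q`_i`_j : prodR F) s).
split; first split=> [s|i s]; first exact: size_poly.
  by rewrite coef_poly; case: ifP => _; rewrite ?size_poly ?size_poly0.
apply/polyP => i; rewrite coef_poly; case: ltnP => [ltiQ|leQi]; last first.
  by rewrite (leq_sizeP _ _ (leqnn _)).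
apply/polyP => j; rewrite coef_poly; case: ltnP => [ltjQ|leQj]; last first.
  by rewrite (leq_sizeP _ _ (leq_trans (max_size_coefXY _ _) leQj)).
rewrite -[RHS]ulim_repr; congr ulim; apply: functional_extensionality_dep => s.
by rewrite coef_poly ltiQ coef_poly ltjQ.
Qed.

Lemma size_ulim_polyXY M e G :
  sizesXY_le M e G -> D [set s | size (G s) = size (ulim_polyXY M e G)].
Proof.
move=> GMe; apply: near_size_eq GMe.1 _ => i.
by rewrite coef_ulim_polyXY //; apply: ulim_poly_eq0; apply: GMe.2.
Qed.

End PolyUltralimit.

(** * The embedding of K(t) into the ultra-hull *)

Section Embedding.
Variables (S : Type) (D : set_system S) (DU : UltraFilter D) (F : S -> fieldType).
Let FD : ProperFilter D := ultra_proper.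
Local Notation K := (fK DU F).
Local Notation Ft := (fun s => ({fraction {poly F s}} : fieldType)).
Local Notation A := (A_to_U DU F).

Lemma A_to_U_ulim_poly N f q : sizes_le N f -> ulim_poly DU N f = q ->
  A q = ulim DU (fun s => tofrac (f s) : Ft s).
Proof.
move=> fN fq; apply/ulim_eq.
have fM : sizes_le (maxn N (size q)) f by move=> s; rewrite (leq_trans (fN s)) ?leq_maxl.
have qM : sizes_le (maxn N (size q)) (poly_repr q).
  by move=> s; rewrite (leq_trans (sizes_le_poly_repr q s)) ?leq_maxr.
suff: D [set s | poly_repr q s = f s] by apply: filterS => s /= <-.
apply/(ulim_poly_eq _ qM fM).
rewrite (ulim_poly_widen DU (sizes_le_poly_repr q)) ?leq_maxr //.
by rewrite (ulim_poly_widen DU fN) ?leq_maxl // ulim_poly_repr.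
Qed.

Lemma A_to_U_is_zmod_morphism : zmod_morphism A.
Proof.
move=> p q; set N := maxn (size p) (size q).
have pN : sizes_le N (poly_repr p).
  by move=> s; rewrite (leq_trans (sizes_le_poly_repr p s)) ?leq_maxl.
have qN : sizes_le N (poly_repr q).
  by move=> s; rewrite (leq_trans (sizes_le_poly_repr q s)) ?leq_maxr.
rewrite (@A_to_U_ulim_poly N (fun s => poly_repr p s - poly_repr q s)); first last.
- rewrite ulim_polyB (ulim_poly_widen DU (sizes_le_poly_repr p)) ?leq_maxl //.
  by rewrite (ulim_poly_widen DU (sizes_le_poly_repr q)) ?leq_maxr // !ulim_poly_repr.
- by move=> s; rewrite (leq_trans (size_polyD _ _)) // size_polyN geq_max pN qN.
rewrite /A_to_U -rmorphB; congr ulim; apply: functional_extensionality_dep => s.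
by rewrite prodR_subE rmorphB.
Qed.

Lemma A_to_U_is_monoid_morphism : monoid_morphism A.
Proof.
split=> [|p q].
  rewrite (@A_to_U_ulim_poly 1 (fun=> 1)); first last.
  - apply/polyP => i; rewrite coef_poly coef1; case: i => [|i] //=.
    rewrite -(rmorph1 (@ulim _ _ DU F)); apply/ulim_eq.
    by apply: filterS filterT => s _ /=; rewrite coef1.
  - by move=> s; rewrite size_poly1.
  by rewrite -(rmorph1 (@ulim _ _ DU Ft)); congr ulim; apply: functional_extensionality_dep => s;
    rewrite rmorph1.
have pN := sizes_le_poly_repr p; have qN := sizes_le_poly_repr q.
rewrite (@A_to_U_ulim_poly (size p + size q) (fun s => poly_repr p s * poly_repr q s)); first last.
- by rewrite ulim_polyM // !ulim_poly_repr.
- exact: sizes_leM.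
rewrite /A_to_U -rmorphM; congr ulim; apply: functional_extensionality_dep => s.
by rewrite rmorphM.
Qed.

HB.instance Definition _ := GRing.isZmodMorphism.Build _ _ A A_to_U_is_zmod_morphism.
HB.instance Definition _ := GRing.isMonoidMorphism.Build _ _ A A_to_U_is_monoid_morphism.

Lemma A_to_U_inj : injective A.
Proof.
apply: raddf_inj => q /(ulim_eq0 DU) q0; rewrite -[q]ulim_poly_repr.
apply/(ulim_poly_eq0 DU (sizes_le_poly_repr q)); apply: filterS q0 => s /= /eqP.
by rewrite tofrac_eq0 => /eqP.
Qed.

(* [F_to_U DU F] unfolds to [frac_lift A]. *)
HB.instance Definition _ := GRing.isNmodMorphism.Build _ _ (F_to_U DU F)
  (frac_lift_is_nmod_morphism A_to_U_inj).
HB.instance Definition _ := GRing.isMonoidMorphism.Build _ _ (F_to_U DU F)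
  (frac_lift_is_monoid_morphism A_to_U_inj).

Lemma F_to_U_tofrac a : F_to_U DU F (tofrac a) = A a.
Proof. exact: (frac_lift_tofrac A_to_U_inj). Qed.

Lemma map_A_to_U_ulim_polyXY n e Qs : sizesXY_le n e Qs ->
  map_poly A (ulim_polyXY DU n e Qs) = ulim_poly DU n (fun s => map_poly (@tofrac _) (Qs s)).
Proof.
move=> QsB; apply/polyP => i; rewrite coef_map /= coef_ulim_polyXY // coef_ulim_poly; last first.
  by move=> s; rewrite (size_map_inj_poly (@tofrac_inj _) (rmorph0 _)); apply: QsB.1.
rewrite (A_to_U_ulim_poly (QsB.2 i) erefl); congr ulim.
by apply: functional_extensionality_dep => s; rewrite coef_map.
Qed.

Lemma size_factor_leq (Q : {poly {poly K}}) (G H : {poly ultrahull DU F}) :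
  G * H = map_poly A Q -> (size Q <= size G + size H)%N.
Proof.
move=> GHE; rewrite -(size_map_inj_poly A_to_U_inj (rmorph0 _)) -GHE.
exact: size_polyM_leq_add.
Qed.

Lemma near_lift_factor e Qs (Q : {poly {poly K}}) (G H : {poly ultrahull DU F}) :
    sizesXY_le (size Q) e Qs -> ulim_polyXY DU (size Q) e Qs = Q ->
    G * H = map_poly A Q ->
  D [set s | poly_repr G s * poly_repr H s = map_poly (@tofrac _) (Qs s)].
Proof.
move=> QsB QsE GHE; have QN := size_factor_leq GHE.
have GHs_bound := sizes_leM (sizes_le_poly_repr G) (sizes_le_poly_repr H).
have Qs_bound : sizes_le (size Q) (fun s => map_poly (@tofrac _) (Qs s)).
  by move=> s; rewrite (size_map_inj_poly (@tofrac_inj _) (rmorph0 _)); apply: QsB.1.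
apply/(ulim_poly_eq DU GHs_bound (fun s => leq_trans (Qs_bound s) QN)).
rewrite ulim_polyM ?ulim_poly_repr ?GHE; try exact: sizes_le_poly_repr.
by rewrite -[in LHS]QsE map_A_to_U_ulim_polyXY // (ulim_poly_widen DU Qs_bound QN).
Qed.

Lemma ultrahull_factor_descends (Q : {poly {poly K}}) (G H : {poly ultrahull DU F}) :
  G != 0 -> H != 0 -> G * H = map_poly A Q ->
  exists G' H', [/\ G' * H' = Q, size G' = size G & size H' = size H].
Proof.
move=> G0 H0 GHE; have [Qs [QsB QsE]] := ulim_polyXY_surj Q.
have QN := size_factor_leq GHE.
set e := sizeY Q in QsB QsE; have Qs_sizeY s : (sizeY (Qs s) <= e)%N.
  by apply/bigmax_leqP => i _; apply: QsB.2.
have near_sG := size_ulim_poly DU (sizes_le_poly_repr G); rewrite ulim_poly_repr in near_sG.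
have near_sH := size_ulim_poly DU (sizes_le_poly_repr H); rewrite ulim_poly_repr in near_sH.
(* Gauss's lemma bounds the t-degrees of the factors by [sizeY (Qs s) <= e]:
   this uniform bound is what makes their ultralimits exist. *)
pose bounded s (GH : {poly {poly F s}} * {poly {poly F s}}) :=
  [/\ (size GH.1 <= size G)%N, (size GH.2 <= size H)%N,
      (sizeY GH.1 <= e)%N & (sizeY GH.2 <= e)%N].
pose factors s (GH : {poly {poly F s}} * {poly {poly F s}}) :=
  [/\ GH.1 * GH.2 = Qs s, size GH.1 = size G & size GH.2 = size H].
have [GHs [GHs_bounded near_factors]] :
    exists GHs : forall s, _, (forall s, bounded s (GHs s)) /\ D [set s | factors s (GHs s)].
  apply: near_choice => [s|].
    by exists (0, 0); split; rewrite /= ?size_poly0 // /sizeY size_poly0 big_ord0.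
  have near_GH := near_lift_factor QsB QsE GHE.
  apply: filterS (filterI near_GH (filterI near_sG near_sH)) => s [GHsE [sGs sHs]].
  have [|| G2 [H2 [E2]]] := Gauss_factor_sizeY _ _ GHsE.
  - by rewrite -size_poly_gt0 sGs size_poly_gt0.
  - by rewrite -size_poly_gt0 sHs size_poly_gt0.
  rewrite sGs sHs => sG2 sH2 G2Q H2Q.
  exists (G2, H2); split; split; rewrite /= ?sG2 ?sH2 //.
    exact: leq_trans G2Q (Qs_sizeY s).
  exact: leq_trans H2Q (Qs_sizeY s).
have G's_bound : sizesXY_le (size G) e (fun s => (GHs s).1).
  by split=> [s|i s]; case: (GHs_bounded s) => // _ _ + _; apply/leq_trans/max_size_coefXY.
have H's_bound : sizesXY_le (size H) e (fun s => (GHs s).2).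
  by split=> [s|i s]; case: (GHs_bounded s) => // _ _ _; apply/leq_trans/max_size_coefXY.
exists (ulim_polyXY DU (size G) e (fun s => (GHs s).1)).
exists (ulim_polyXY DU (size H) e (fun s => (GHs s).2)); split.
- rewrite -ulim_polyXYM // (@eq_ulim_polyXY _ _ _ _ _ _ _ Qs).
    by rewrite (ulim_polyXY_widen DU QsB) ?leq_addr.
  by apply: filterS near_factors => s [].
- apply: (near_eq DU (size_ulim_polyXY DU G's_bound)).
  by apply: filterS near_factors => s [].
- apply: (near_eq DU (size_ulim_polyXY DU H's_bound)).
  by apply: filterS near_factors => s [].
Qed.

Lemma map_F_to_U_reducible (P : {poly fF DU F}) :
  reducible_poly (map_poly (F_to_U DU F) P) -> reducible_poly P.
Proof.
move=> [G [H [GHE G1 H1]]]; have [[a Q] /= a0 QE] := clear_denominators P.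
have Aa0 : A a != 0 by rewrite (raddf_eq0 _ A_to_U_inj).
have [G0 H0] : G != 0 /\ H != 0 by rewrite -!size_poly_gt0 !(ltn_trans _ G1, ltn_trans _ H1).
have AGHE : (A a *: G) * H = map_poly A Q.
  have -> : map_poly A Q = map_poly (F_to_U DU F) (map_poly (@tofrac _) Q).
    by rewrite -map_poly_comp; apply: eq_map_poly => x /=; rewrite F_to_U_tofrac.
  by rewrite QE map_polyZ /= F_to_U_tofrac -GHE scalerAl.
have AG0 : A a *: G != 0 by rewrite scaler_eq0 negb_or Aa0.
have [G' [H' [E sG' sH']]] := ultrahull_factor_descends AG0 H0 AGHE.
have ta0 : tofrac a != 0 by rewrite tofrac_eq0.
exists ((tofrac a)^-1 *: map_poly (@tofrac _) G'), (map_poly (@tofrac _) H'); split.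
- by rewrite -scalerAl -rmorphM /= E QE scalerA mulVf ?scale1r.
- by rewrite size_scale ?invr_eq0 // (size_map_inj_poly (@tofrac_inj _) (rmorph0 _)) sG' size_scale.
- by rewrite (size_map_inj_poly (@tofrac_inj _) (rmorph0 _)) sH'.
Qed.

End Embedding.

Theorem mainTheorem3 (S : Type) (D : set_system S) (DU : UltraFilter D)
  (S_infinite : ~ finite_set [set: S])
  (D_nonprincipal : forall s : S, ~ D [set s])
  (F : S -> fieldType) (P : {poly fF DU F}) :
  irreducible_poly P <-> irreducible_poly (map_poly (F_to_U DU F) P).
Proof.
split=> /irredpP[P1 P_irr]; apply/irredpP; rewrite size_map_poly in P1 *; split=> // P_red.
  exact/P_irr/map_F_to_U_reducible.
exact/P_irr/reducible_map_poly.
Qed.
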